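(* There is an absolute constant $C>0$ such that the following holds. Let $(G,s,t)$ be an oriented serial superedge on $n$ vertices with principal subgraphs $(G_1,s_1,t_1),\dots,(G_k,s_k,t_k)$, each $G_i$ non-serial and having $n_i$ vertices. Then $$\sum_{i=1}^k n_i\,\big|\mathsf{NT}(G_i)/\mathrm{Aut}_{\mathrm{or}}(G_i,s_i,t_i)\big|\le C\,n\,\big|\mathsf{NT}(G)/\mathrm{Aut}_{\mathrm{or}}(G,s,t)\big|,$$ i.e. the left side is $O\big(n\,|\mathsf{NT}(G)/\mathrm{Aut}_{\mathrm{or}}(G,s,t)|\big)$.
   Context: All graphs are finite, simple and undirected. An oriented series-parallel graph is a triple $(G,s,t)$ where $G$ is a graph and $s\neq t$ are vertices, defined recursively: (i) $G$ is a single edge with vertex set $\{s,t\}$; or (ii) (serial superedge) there are $k\ge 2$ oriented series-parallel graphs $(G_1,s_1,t_1),\dots,(G_k,s_k,t_k)$ with $s_1=s$, $t_k=t$, $t_i=s_{i+1}$ for $1\le i<k$, $V(G_i)\cap V(G_{i+1})=\{s_{i+1}\}$, $V(G_i)\cap V(G_j)=\emptyset$ for $|i-j|\ge2$, and $G=G_1\cup\dots\cup G_k$; or (iii) (parallel superedge) there are $k\ge2$ oriented series-parallel graphs $(G_1,s,t),\dots,(G_k,s,t)$ with $V(G_i)\cap V(G_j)=\{s,t\}$ for $i\neq j$ and $G=G_1\cup\dots\cup G_k$. The $G_i$ are the principal subgraphs; a graph is non-serial if it is not a serial superedge. $\mathrm{Aut}_{\mathrm{or}}(H,u,v)$ is the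 group of automorphisms of $H$ fixing $u$ and $v$. A near tree of $H$ is a spanning subgraph obtained from a spanning tree of $H$ by deleting one edge; $\mathsf{NT}(H)$ is the set of near trees, and $\mathsf{NT}(H)/\Gamma$ the set of orbits under the group $\Gamma$ (near trees $A,B$ in the same orbit iff $A=\sigma(B)$ for some $\sigma\in\Gamma$). *)

From mathcomp Require Import all_boot fingroup perm.
From mathcomp Require Import boolp.

Set Implicit Arguments.
Unset Strict Implicit.
Unset Printing Implicit Defensive.

(* A (finite simple) graph living inside an ambient finite type T:
   a vertex set and a set of edges, each edge a 2-element vertex set. *)
Record graph (T : finType) := Graph { gV : {set T}; gE : {set {set T}} }.

Section SP.
Variable T : finType.

Definition serial_cond (G : graph T) (s t : T) (k : nat)
    (Gs : nat -> graph T) (ss ts : nat -> T) : Prop :=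
  [/\ 2 <= k, ss 0 = s, ts k.-1 = t,
      (forall i, i.+1 < k -> ts i = ss i.+1 /\
                             gV (Gs i) :&: gV (Gs i.+1) = [set ss i.+1]) &
      [/\ (forall i j, i.+1 < j -> j < k -> gV (Gs i) :&: gV (Gs j) = set0),
           gV G = \bigcup_(i < k) gV (Gs i) &
           gE G = \bigcup_(i < k) gE (Gs i)]].

Definition parallel_cond (G : graph T) (s t : T) (k : nat)
    (Gs : nat -> graph T) : Prop :=
  [/\ 2 <= k,
      (forall i j, i < k -> j < k -> i != j ->
          gV (Gs i) :&: gV (Gs j) = [set s; t]),
      gV G = \bigcup_(i < k) gV (Gs i) &
      gE G = \bigcup_(i < k) gE (Gs i)].

Inductive SP : graph T -> T -> T -> Prop :=
| SP_edge (s t : T) : s != t -> SP (Graph [set s; t] [set [set s; t]]) s t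
| SP_serial (G : graph T) (s t : T) (k : nat) (Gs : nat -> graph T) (ss ts : nat -> T) :
    serial_cond G s t k Gs ss ts ->
    (forall i, i < k -> SP (Gs i) (ss i) (ts i)) -> SP G s t
| SP_parallel (G : graph T) (s t : T) (k : nat) (Gs : nat -> graph T) :
    parallel_cond G s t k Gs ->
    (forall i, i < k -> SP (Gs i) s t) -> SP G s t.

Definition serial_superedge (G : graph T) (s t : T) (k : nat)
    (Gs : nat -> graph T) (ss ts : nat -> T) : Prop :=
  serial_cond G s t k Gs ss ts /\ (forall i, i < k -> SP (Gs i) (ss i) (ts i)).

Definition non_serial (G : graph T) (s t : T) : Prop :=
  ~ exists k Gs ss ts, serial_superedge G s t k Gs ss ts.

(* Spanning subgraphs are given by their edge sets F (vertex set gV G). *)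
Definition adj (F : {set {set T}}) : rel T := fun x y => [set x; y] \in F.

Definition connected_on (V : {set T}) (F : {set {set T}}) : Prop :=
  forall x y, x \in V -> y \in V -> connect (adj F) x y.

Definition acyclic (F : {set {set T}}) : Prop :=
  ~ exists c : seq T, 3 <= size c /\ ucycle (adj F) c.

Definition spanning_tree (G : graph T) (F : {set {set T}}) : Prop :=
  F \subset gE G /\ connected_on (gV G) F /\ acyclic F.

Definition near_tree (G : graph T) (F' : {set {set T}}) : Prop :=
  exists F e, spanning_tree G F /\ e \in F /\ F' = F :\ e.

Definition NT (G : graph T) : {set {set {set T}}} := [set F | `[< near_tree G F >]].

Definition is_aut_or (G : graph T) (u v : T) (sigma : {perm T}) : bool :=
  [&& sigma @: gV G == gV G,
      [forall x in gV G, forall y in gV G,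
         ([set x; y] \in gE G) == ([set sigma x; sigma y] \in gE G)],
      sigma u == u & sigma v == v].

Definition img_edges (sigma : {perm T}) (B : {set {set T}}) : {set {set T}} :=
  [set [set sigma x | x in e] | e : {set T} in B].

Definition NT_orbit (G : graph T) (u v : T) (A : {set {set T}}) : {set {set {set T}}} :=
  [set B in NT G | [exists sigma : {perm T}, is_aut_or G u v sigma && (B == img_edges sigma A)]].

Definition n_orbits (G : graph T) (u v : T) : nat :=
  #|[set NT_orbit G u v A | A in NT G]|.

End SP.

(* Every automorphism of G fixing s and t fixes each junction vertex where two consecutive
   pieces meet: these are exactly the vertices separating s from t (a vertex inside a
   non-serial piece separates nothing), and they are linearly ordered by which of them
   separates which from s.  Hence such an automorphism maps every piece G_i onto itself.
   Completing a near tree A of G_i by fixed spanning trees of the other pieces gives a near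
   tree of G whose Aut_or(G)-orbit determines i and the Aut_or(G_i)-orbit of A.  Thus
   sum_i |NT(G_i)/Aut_or(G_i)| <= |NT(G)/Aut_or(G)|, and C = 1 works since n_i <= n. *)

From mathcomp Require Import all_boot fingroup perm.
From mathcomp Require Import boolp.
From mathcomp Require Import zify.

Set Implicit Arguments.
Unset Strict Implicit.
Unset Printing Implicit Defensive.

Section Connectivity.
Variable T : finType.
Implicit Types (F : {set {set T}}) (x y : T).

Lemma adj_sym F : symmetric (adj F).
Proof. by move=> x y; rewrite /adj setUC. Qed.

Lemma connect_adj_sym F x y : connect (adj F) x y = connect (adj F) y x.
Proof. exact: (sym_connect_sym (adj_sym F)). Qed.

Lemma connect_adjS F F' x y :
  F \subset F' -> connect (adj F) x y -> connect (adj F') x y.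
Proof. by move=> sFF'; apply: connect_sub => a b h; apply/connect1/(subsetP sFF'). Qed.

Lemma connect_homo_collapse (e e' : rel T) (f : T -> T) :
  (forall a b, e a b -> f a = f b \/ e' (f a) (f b)) ->
  forall x y, connect e x y -> connect e' (f x) (f y).
Proof.
move=> fe x y /connectP [p]; elim: p x => [|z p IH] x /=; first by move=> _ ->.
case/andP=> exz pz ly; apply: connect_trans (IH z pz ly).
by case: (fe _ _ exz) => [->|h]; [exact: connect0 | exact: connect1].
Qed.

Lemma connect_stable (e : rel T) (L : pred T) :
  (forall a b, e a b -> L a -> L b) -> forall x y, connect e x y -> L x -> L y.
Proof.
move=> eL x y /connectP [p]; elim: p x => [|z p IH] x /=; first by move=> _ ->.
by case/andP=> exz pz ly Lx; apply: (IH z pz ly); apply: eL exz Lx.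
Qed.

Lemma imset_set2 (f : T -> T) x y : f @: [set x; y] = [set f x; f y].
Proof. by rewrite imsetU1 imset_set1. Qed.

Lemma ucycle_edge_not_bridge F c : 3 <= size c -> ucycle (adj F) c ->
  exists x y, [/\ x != y, [set x; y] \in F & connect (adj (F :\ [set x; y])) y x].
Proof.
case: c => [|x [|y [|z q]]] //= _ /andP [cyc uq].
move: cyc => /= /and3P [exy eyz pth].
move: uq; rewrite /= !inE !negb_or.
move=> /andP [/and3P [nxy nxz nxq] /andP [/andP [nyz nyq] _]].
exists x, y; split => //.
apply/connectP; exists (z :: rcons q x); last by rewrite /= last_rcons.
rewrite /=; apply/andP; split.
  rewrite /adj in eyz; rewrite /adj !inE eyz andbT; apply/negP => /eqP E.
  have : x \in [set y; z] by rewrite E set21.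
  by rewrite in_set2 (negbTE nxz) (negbTE nxy).
apply: (@sub_in_path _ (predC1 y) (adj F)) pth.
  move=> a b /= ha hb; rewrite /adj !inE => ->; rewrite andbT.
  apply/negP => /eqP E; have : y \in [set a; b] by rewrite E set22.
  by rewrite in_set2 !(eq_sym y) (negbTE ha) (negbTE hb).
apply/allP => a; rewrite -rcons_cons mem_rcons !inE => /or3P [/eqP ->|/eqP ->|ha].
- done.
- by rewrite eq_sym.
- by apply/eqP => ay; rewrite -ay ha in nyq.
Qed.

Lemma acyclic_edge_bridge F x y : acyclic F -> x != y -> [set x; y] \in F ->
  ~~ connect (adj (F :\ [set x; y])) x y.
Proof.
move=> acF nxy exy; apply/negP => /connectP [p pth ly].
move: ly; case: (shortenP pth) => p' pth' up' _ ly.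
apply: acF; exists (x :: p'); split.
  case: p' pth' up' ly => [|z [|w r]] //=.
  - by move=> _ _ yx; rewrite yx eqxx in nxy.
  - by move=> + _ yz; rewrite yz /adj !inE eqxx.
rewrite /ucycle up' andbT /= rcons_path.
rewrite (sub_path _ pth') /=; last by move=> a b; rewrite /adj !inE => /andP [].
by rewrite /adj -ly setUC.
Qed.

Lemma exists_spanning_tree (H : graph T) :
  connected_on (gV H) (gE H) -> exists F, spanning_tree H F.
Proof.
suff: forall F, F \subset gE H -> connected_on (gV H) F -> exists F', spanning_tree H F'.
  by apply; rewrite subxx.
move=> F0; have [n] := ubnP #|F0|; elim: n F0 => // n IH F ltFn sF conF.
have [[c [sc uc]]|noc] := pselect (exists c : seq T, 3 <= size c /\ ucycle (adj F) c);
  last by exists F.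
have [x [y [nxy eF cyx]]] := ucycle_edge_not_bridge sc uc.
apply: (IH (F :\ [set x; y])).
- by move: ltFn; rewrite (cardsD1 [set x; y] F) eF.
- exact: subset_trans (subsetDl _ _) sF.
- move=> a b ha hb; apply: (connect_sub _ (conF a b ha hb)) => c1 c2 h.
  have [exy|nexy] := eqVneq [set c1; c2] [set x; y]; last first.
    by apply: connect1; rewrite /adj !inE nexy.
  have /set2P c1xy : c1 \in [set x; y] by rewrite -exy set21.
  have /set2P c2xy : c2 \in [set x; y] by rewrite -exy set22.
  by case: c1xy c2xy => -> [] ->; rewrite ?connect0 // connect_adj_sym.
Qed.

Lemma NT_spanning_tree (H : graph T) (A : {set {set T}}) : A \in NT H ->
  exists F e, [/\ spanning_tree H F, e \in F & A = F :\ e].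
Proof. by rewrite inE => /asboolP [F [e [hF [he ->]]]]; exists F, e. Qed.

End Connectivity.

Section EdgeImages.
Variable T : finType.
Implicit Types (B : {set {set T}}) (sigma tau : {perm T}).

Definition edge_img sigma (e : {set T}) : {set T} := sigma @: e.

Lemma edge_img_inj sigma : injective (edge_img sigma).
Proof. exact: imset_inj perm_inj. Qed.

Lemma edge_imgM sigma tau e : edge_img (sigma * tau)%g e = edge_img tau (edge_img sigma e).
Proof. by rewrite /edge_img -imset_comp; apply: eq_imset => a; rewrite /= permM. Qed.

Lemma edge_img1 e : edge_img 1%g e = e.
Proof. by rewrite /edge_img (eq_imset _ (@perm1 T)) imset_id. Qed.

Lemma img_edgesE sigma B : img_edges sigma B = edge_img sigma @: B.
Proof. by []. Qed.

Lemma img_edgesI sigma B B' :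
  edge_img sigma @: (B :&: B') = edge_img sigma @: B :&: edge_img sigma @: B'.
Proof. by apply: imsetI => a b _ _; apply: edge_img_inj. Qed.

Lemma img_edgesM sigma tau B :
  img_edges (sigma * tau)%g B = img_edges tau (img_edges sigma B).
Proof. by rewrite !img_edgesE -imset_comp; apply: eq_imset => e; rewrite /= edge_imgM. Qed.

Lemma img_edges1 B : img_edges 1%g B = B.
Proof. by rewrite img_edgesE (eq_imset _ edge_img1) imset_id. Qed.

Lemma img_edgesK sigma B : img_edges (sigma^-1)%g (img_edges sigma B) = B.
Proof. by rewrite -img_edgesM mulgV img_edges1. Qed.

Lemma connected_on_img sigma V B :
  connected_on V B -> connected_on (sigma @: V) (img_edges sigma B).
Proof.
move=> cB x' y' /imsetP [x hx ->] /imsetP [y hy ->].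
apply: (connect_homo_collapse _ (cB x y hx hy)) => a b hab; right.
by rewrite /adj -imset_set2; apply: imset_f.
Qed.

Lemma is_aut_orM (H : graph T) u v sigma tau :
  is_aut_or H u v sigma -> is_aut_or H u v tau -> is_aut_or H u v (sigma * tau)%g.
Proof.
case/and4P => /eqP hV /forallP hE /eqP hu /eqP hv.
case/and4P => /eqP hV' /forallP hE' /eqP hu' /eqP hv'.
apply/and4P; split; last 2 first.
- by rewrite permM hu hu'.
- by rewrite permM hv hv'.
- by rewrite (eq_imset _ (permM sigma tau)) imset_comp hV hV'.
apply/forallP => x; apply/implyP => hx; apply/forallP => y; apply/implyP => hy.
have hsx : sigma x \in gV H by rewrite -hV imset_f.
have hsy : sigma y \in gV H by rewrite -hV imset_f.
move: (implyP (hE x) hx) => /forallP /(_ y) /implyP /(_ hy) /eqP ->.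
move: (implyP (hE' _) hsx) => /forallP /(_ (sigma y)) /implyP /(_ hsy) /eqP ->.
by rewrite !permM.
Qed.

Lemma is_aut_orV (H : graph T) u v sigma :
  is_aut_or H u v sigma -> is_aut_or H u v (sigma^-1)%g.
Proof.
case/and4P => /eqP hV /forallP hE /eqP hu /eqP hv.
have hV' : (sigma^-1)%g @: gV H = gV H.
  by rewrite -{1}hV -imset_comp (eq_imset _ (permK sigma)) imset_id.
apply/and4P; split; last 2 first.
- by rewrite -{1}hu permK.
- by rewrite -{1}hv permK.
- by rewrite hV'.
apply/forallP => x; apply/implyP => hx; apply/forallP => y; apply/implyP => hy.
have hsx : (sigma^-1)%g x \in gV H by rewrite -hV' imset_f.
have hsy : (sigma^-1)%g y \in gV H by rewrite -hV' imset_f.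
move: (implyP (hE _) hsx) => /forallP /(_ ((sigma^-1)%g y)) /implyP /(_ hsy) /eqP.
by rewrite !permKV => ->.
Qed.

Lemma is_aut_or1 (H : graph T) u v : is_aut_or H u v 1%g.
Proof.
apply/and4P; split; rewrite ?perm1 //; first by rewrite (eq_imset _ (@perm1 T)) imset_id.
by apply/forallP => x; apply/implyP => _; apply/forallP => y; apply/implyP => _; rewrite !perm1.
Qed.

Lemma NT_orbit_img (H : graph T) u v sigma A :
  is_aut_or H u v sigma -> NT_orbit H u v (img_edges sigma A) = NT_orbit H u v A.
Proof.
move=> hs; apply/setP => B; rewrite !inE; congr (_ && _); apply/existsP/existsP.
  case=> tau /andP [ht /eqP ->]; exists (sigma * tau)%g.
  by rewrite is_aut_orM //= img_edgesM.
case=> tau /andP [ht /eqP ->]; exists ((sigma^-1)%g * tau)%g.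
by rewrite is_aut_orM ?is_aut_orV //= img_edgesM img_edgesK.
Qed.

Lemma NT_orbit_refl (H : graph T) u v A : A \in NT H -> A \in NT_orbit H u v A.
Proof.
by move=> hA; rewrite inE hA /=; apply/existsP; exists 1%g; rewrite is_aut_or1 img_edges1 eqxx.
Qed.

End EdgeImages.

Lemma leq_card_imset_factor (aT bT cT : finType) (X : {set aT}) (f : aT -> bT) (g : aT -> cT) :
  {in X &, forall w1 w2, g w1 = g w2 -> f w1 = f w2} -> #|f @: X| <= #|g @: X|.
Proof.
move=> gf; case: (set_0Vmem X) => [->|[x0 _]]; first by rewrite !imset0 cards0.
pose h c := if [pick w in X | g w == c] is Some w then f w else f x0.
suff -> : f @: X = h @: (g @: X) by apply: leq_imset_card.
have hg w : w \in X -> h (g w) = f w.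
  move=> hw; rewrite /h; case: pickP => [w' /andP [hw' /eqP]|/(_ w)]; first exact: gf.
  by rewrite hw eqxx.
apply/setP => b; apply/imsetP/imsetP => [[w hw ->]|[c /imsetP [w hw ->] ->]].
  by exists (g w); rewrite ?imset_f ?hg.
by exists w; rewrite ?hg.
Qed.

Lemma leq_sum_card_disjoint (U : finType) (Q : nat -> {set U}) (S : {set U}) n :
  (forall i, i < n -> Q i \subset S) ->
  (forall i j, i < n -> j < n -> i != j -> Q i :&: Q j = set0) ->
  \sum_(i < n) #|Q i| <= #|S|.
Proof.
move=> sQS dQ.
suff [-> sub] : \sum_(i < n) #|Q i| = #|\bigcup_(i < n) Q i| /\ \bigcup_(i < n) Q i \subset S.
  exact: subset_leq_card.
elim: n sQS dQ => [|n IH] sQS dQ; first by rewrite !big_ord0 cards0 sub0set.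
have [E sub] := IH (fun i hi => sQS i (ltnW hi)) (fun i j hi hj => dQ i j (ltnW hi) (ltnW hj)).
rewrite !big_ord_recr /= E; split; last by rewrite subUset sub sQS.
rewrite cardsU; suff -> : \bigcup_(i < n) Q i :&: Q n = set0 by rewrite cards0 subn0.
apply/setP => w; rewrite !inE; apply/negP => /andP [/bigcupP [i _ hw] hn].
have := dQ i n (ltnW (ltn_ord i)) (ltnSn n) (negbT (ltn_eqF (ltn_ord i))).
by move/setP/(_ w); rewrite !inE hw hn.
Qed.

Definition edges_avoiding (T : finType) (E : {set {set T}}) (c : T) := [set e in E | c \notin e].

Lemma edges_avoidingS (T : finType) (E E' : {set {set T}}) c :
  E \subset E' -> edges_avoiding E c \subset edges_avoiding E' c.
Proof. by move=> sEE'; apply/subsetP => e; rewrite !inE => /andP [/(subsetP sEE') -> ->]. Qed.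

Section SerialChain.
Variable T : finType.
Variables (G : graph T) (s t : T) (k : nat) (Gs : nat -> graph T) (ss ts : nat -> T).
Hypothesis hser : serial_cond G s t k Gs ss ts.
Hypothesis hterm : forall i, i < k -> [/\ ss i != ts i, ss i \in gV (Gs i) & ts i \in gV (Gs i)].
Local Notation V i := (gV (Gs i)).

(* Pieces m-1 and m meet at junction m; junction 0 = s and junction k = t. *)
Definition junction m := if m < k then ss m else t.
Local Notation u := junction.

Lemma serial_k_gt1 : 1 < k. Proof. by case: hser. Qed.
Lemma serial_k_gt0 : 0 < k. Proof. by have := serial_k_gt1; lia. Qed.

Lemma junction0 : u 0 = s.
Proof. by rewrite /junction serial_k_gt0; case: hser. Qed.

Lemma junctionk : u k = t.
Proof. by rewrite /junction ltnn. Qed.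

Lemma junction_lt i : i < k -> u i = ss i.
Proof. by rewrite /junction => ->. Qed.

Lemma ts_junction i : i < k -> ts i = u i.+1.
Proof.
move=> hi; rewrite /junction; case: ltnP => h; first by case: hser => _ _ _ /(_ i h) [].
have -> : i = k.-1 by lia.
by case: hser.
Qed.

Lemma junction_in i : i < k -> u i \in V i.
Proof. by move=> hi; rewrite junction_lt //; case: (hterm hi). Qed.

Lemma junctionS_in i : i < k -> u i.+1 \in V i.
Proof. by move=> hi; rewrite -ts_junction //; case: (hterm hi). Qed.

Lemma junctionk_in : u k \in V k.-1.
Proof. by have := junctionS_in (i := k.-1); rewrite prednK ?serial_k_gt0 //; apply; lia. Qed.

Lemma piece_meet a b x : a < b -> b < k -> x \in V a -> x \in V b -> b = a.+1 /\ x = u b.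
Proof.
move=> hab hb xa xb; case: hser => _ _ _ meet [disj _ _].
case: (ltngtP a.+1 b) => h; last 2 first.
- by lia.
- have [_ /setP/(_ x)] := meet a ltac:(by rewrite h).
  by rewrite !inE xa h xb => /esym /eqP ->; rewrite junction_lt.
by have /setP/(_ x) := disj a b h hb; rewrite !inE xa xb.
Qed.

Lemma junction_neq_next i : i < k -> u i != u i.+1.
Proof. by move=> hi; rewrite junction_lt // -ts_junction //; case: (hterm hi). Qed.

Lemma junction_inj a b : a <= k -> b <= k -> u a = u b -> a = b.
Proof.
wlog lt : a b / a < b.
  move=> W ha hb e; case: (ltngtP a b) => h //; first exact: W.
  by symmetry; apply: W.
move=> ha hb e; case: (ltngtP a.+1 b) => h; last 2 first.
- by lia.
- by move: e; rewrite -h => /eqP; rewrite (negbTE (junction_neq_next _)) //; lia.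
have h1 : b.-1 < k by lia.
have ha' : u a \in V a by apply: junction_in; lia.
have hb' : u a \in V b.-1 by rewrite e; have := junctionS_in h1; rewrite prednK //; lia.
have [E1 E2] := piece_meet (a := a) (b := b.-1) ltac:(lia) h1 ha' hb'.
by have := junction_neq_next (i := a) ltac:(lia); rewrite E2 E1 eqxx.
Qed.

Lemma serial_vertexP x : x \in gV G -> exists2 i, i < k & x \in V i.
Proof. by case: hser => _ _ _ _ [_ -> _] /bigcupP [i _ h]; exists i. Qed.

Lemma serial_piece_vertices i : i < k -> V i \subset gV G.
Proof.
case: hser => _ _ _ _ [_ -> _] hi; apply/subsetP => x hx.
by apply/bigcupP; exists (Ordinal hi).
Qed.

Lemma serial_edgeP e : e \in gE G -> exists2 i, i < k & e \in gE (Gs i).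
Proof. by case: hser => _ _ _ _ [_ _ ->] /bigcupP [i _ h]; exists i. Qed.

Lemma serial_piece_edges i : i < k -> gE (Gs i) \subset gE G.
Proof.
case: hser => _ _ _ _ [_ _ ->] hi; apply/subsetP => x hx.
by apply/bigcupP; exists (Ordinal hi).
Qed.

Lemma connect_junctions (e : rel T) b : b <= k ->
  (forall l, l < b -> connect e (u l) (u l.+1)) -> connect e (u 0) (u b).
Proof.
elim: b => [|b IH] hb H; first exact: connect0.
exact: connect_trans (IH (ltnW hb) (fun l hl => H l (ltnW hl))) (H b (ltnSn b)).
Qed.

Lemma connect_pieces (e : rel T) j x : j < k ->
  (forall l, l <= j -> forall y, y \in V l -> connect e (u l) y) ->
  x \in V j -> connect e (u 0) x.
Proof.
move=> hj H hx.
apply: connect_trans (connect_junctions (b := j) (ltnW hj) _) (H j (leqnn j) x hx).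
by move=> l hl; apply: H (ltnW hl) _ _; apply: junctionS_in; lia.
Qed.

End SerialChain.

Section SeriesParallel.
Variable T : finType.
Implicit Types (H : graph T) (a b : T).

Lemma SP_terminals H a b : SP H a b -> [/\ a != b, a \in gV H & b \in gV H].
Proof.
elim => {H a b} [a b nab | G s t k Gs ss ts hser _ IH | G s t k Gs [k2 _ hV _] _ IH].
- by rewrite /= set21 set22.
- have k0 := serial_k_gt0 hser; split.
  + apply/negP => /eqP st.
    have := junction_inj hser IH (a := 0) (b := k) (leq0n k) (leqnn k).
    rewrite (junction0 hser) junctionk st => /(_ erefl) k0e.
    by have := serial_k_gt1 hser; rewrite -k0e.
  + rewrite -(junction0 hser); apply: (subsetP (serial_piece_vertices hser k0)).
    exact: (junction_in _ IH k0).
  + rewrite -(junctionk t k ss); apply: (subsetP (serial_piece_vertices hser (i := k.-1) _)).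
      by lia.
    exact: (junctionk_in hser IH).
- have k0 : 0 < k by lia.
  have [nst hs ht] := IH 0 k0; rewrite hV; split => //; apply/bigcupP; by exists (Ordinal k0).
Qed.

Lemma SP_edge_pair H a b e : SP H a b -> e \in gE H ->
  exists x y, [/\ x != y, x \in gV H, y \in gV H & e = [set x; y]].
Proof.
move=> hH; elim: hH e => {H a b}
  [a b nab | G s t k Gs ss ts hser hsp IH | G s t k Gs [k2 _ hV hE] _ IH] e.
- by rewrite inE => /eqP ->; exists a, b; rewrite set21 set22.
- have hterm i (hi : i < k) := SP_terminals (hsp i hi).
  move=> /(serial_edgeP hser) [i hi he].
  have [x [y [nxy hx hy ->]]] := IH i hi _ he.
  by exists x, y; split => //; apply: (subsetP (serial_piece_vertices hser hi)).
- rewrite hE => /bigcupP [i _ he].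
  have [x [y [nxy hx hy ->]]] := IH i (ltn_ord i) _ he.
  by exists x, y; split => //; rewrite hV; apply/bigcupP; exists i.
Qed.

Lemma SP_edge_vertex H a b e z : SP H a b -> e \in gE H -> z \in e -> z \in gV H.
Proof.
move=> hH he; have [x [y [_ hx hy ->]]] := SP_edge_pair hH he.
by case/set2P => ->.
Qed.

Lemma SP_edges_avoiding H a b (E : {set {set T}}) c :
  SP H a b -> gE H \subset E -> c \notin gV H -> gE H \subset edges_avoiding E c.
Proof.
move=> hH sE hc; apply/subsetP => e he; rewrite inE (subsetP sE _ he).
by apply: contraNN hc; apply: SP_edge_vertex hH he.
Qed.

Lemma SP_connect H a b x : SP H a b -> x \in gV H -> connect (adj (gE H)) a x.
Proof.
move=> hH; elim: hH x => {H a b}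
  [a b nab | G s t k Gs ss ts hser hsp IH | G s t k Gs [k2 _ hV hE] _ IH] x.
- by case/set2P => ->; [exact: connect0 | apply: connect1; rewrite /adj inE].
- have hterm i (hi : i < k) := SP_terminals (hsp i hi).
  move=> /(serial_vertexP hser) [j hj hx].
  rewrite -(junction0 hser); apply: (connect_pieces hser hterm hj _ hx) => l hl y hy.
  have lk : l < k by lia.
  rewrite junction_lt //; apply: connect_adjS (serial_piece_edges hser lk) _.
  exact: IH.
- rewrite hV => /bigcupP [j _ hx].
  apply: connect_adjS (IH j (ltn_ord j) x hx).
  by rewrite hE; apply/subsetP => e he; apply/bigcupP; exists j.
Qed.

Lemma SP_connect_avoid H a b x : SP H a b -> x \in gV H -> x != b ->
  connect (adj (edges_avoiding (gE H) b)) a x.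
Proof.
move=> hH; elim: hH x => {H a b}
  [a b nab | G s t k Gs ss ts hser hsp IH | G s t k Gs [k2 _ hV hE] _ IH] x.
- by case/set2P => -> //; rewrite eqxx.
- have hterm i (hi : i < k) := SP_terminals (hsp i hi).
  move=> /(serial_vertexP hser) [j hj hx] hxt.
  have k2 := serial_k_gt1 hser.
  have t_notin l : l < k.-1 -> t \notin gV (Gs l).
    move=> hl; apply/negP => htl.
    have ht : t \in gV (Gs k.-1) by rewrite -{1}(junctionk t k ss); apply: junctionk_in hser hterm.
    have [_ E2] := piece_meet hser (a := l) (b := k.-1) hl ltac:(lia) htl ht.
    have := junction_inj hser hterm (a := k) (b := k.-1) (leqnn k) ltac:(lia).
    by rewrite junctionk -E2 => /(_ erefl); lia.
  have avoid_t l : l < k.-1 -> gE (Gs l) \subset edges_avoiding (gE G) t.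
    move=> hl; have hlk : l < k by lia.
    exact: SP_edges_avoiding (hsp l hlk) (serial_piece_edges hser hlk) (t_notin l hl).
  have to_junction l : l <= k.-1 ->
      connect (adj (edges_avoiding (gE G) t)) (junction t k ss 0) (junction t k ss l).
    move=> hl; apply: connect_junctions => [|i hi]; first by lia.
    have hik : i < k by lia.
    rewrite junction_lt //; apply: connect_adjS (avoid_t i _) _; first by lia.
    exact: SP_connect (hsp i hik) (junctionS_in hser hterm hik).
  rewrite -(junction0 hser).
  have [hj'|hj'] := ltnP j k.-1.
    apply: connect_trans (to_junction j (ltnW hj')) _.
    by rewrite junction_lt //; apply: connect_adjS (avoid_t j hj') (SP_connect (hsp j hj) hx).
  have ej : j = k.-1 by lia.
  apply: connect_trans (to_junction j ltac:(lia)) _.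
  have tt : ts j = t by rewrite ej; case: hser.
  rewrite junction_lt //; move: (IH j hj x hx); rewrite tt => /(_ hxt).
  exact/connect_adjS/edges_avoidingS/(serial_piece_edges hser hj).
- rewrite hV => /bigcupP [j _ hx] hxt.
  apply: connect_adjS (IH j (ltn_ord j) x hx hxt).
  by apply: edges_avoidingS; rewrite hE; apply/subsetP => e he; apply/bigcupP; exists j.
Qed.

(* Being non-serial, H is an edge or a parallel composition, and v misses some branch. *)
Lemma non_serial_connect_avoid H a b : SP H a b -> non_serial H a b ->
  forall v, v \in gV H -> v != a -> v != b -> connect (adj (edges_avoiding (gE H) v)) a b.
Proof.
case => {H a b} [a b nab _ v | G s t k Gs ss ts hser hsp [] | G s t k Gs [k2 hI hV hE] hsp _ v].
- by case/set2P => ->; rewrite eqxx.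
- by exists k, Gs, ss, ts.
rewrite hV => /bigcupP [j _ hv] hvs hvt.
pose j' := if j == 0 :> nat then 1 else 0.
have hj' : j' < k by rewrite /j'; case: ifP; lia.
have nj : j' != j by rewrite /j'; case: ifP => /eqP; lia.
have nv : v \notin gV (Gs j').
  apply/negP => hv'; have /setP/(_ v) := hI j j' (ltn_ord j) hj' ltac:(by rewrite eq_sym).
  by rewrite !inE hv hv' (negbTE hvs) (negbTE hvt).
have [_ _ hb] := SP_terminals (hsp j' hj').
apply: connect_adjS (SP_connect (hsp j' hj') hb).
apply: SP_edges_avoiding (hsp j' hj') _ nv.
by rewrite hE; apply/subsetP => e he; apply/bigcupP; exists (Ordinal hj').
Qed.

End SeriesParallel.

Section SPAutomorphism.
Variables (T : finType) (H : graph T) (a b : T) (sigma : {perm T}).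
Hypothesis hs : is_aut_or H a b sigma.

Lemma is_aut_orP : [/\ sigma @: gV H = gV H,
  forall x y, x \in gV H -> y \in gV H ->
    ([set sigma x; sigma y] \in gE H) = ([set x; y] \in gE H),
  sigma a = a & sigma b = b].
Proof.
case/and4P: hs => /eqP hV /forallP hE /eqP ha /eqP hb; split => // x y hx hy.
by move: (implyP (hE x) hx) => /forallP /(_ y) /implyP /(_ hy) /eqP ->.
Qed.

Lemma aut_or_vertex x : (sigma x \in gV H) = (x \in gV H).
Proof. by case: is_aut_orP => hV _ _ _; rewrite -{1}hV mem_imset //; apply: perm_inj. Qed.

Hypothesis hH : SP H a b.

Lemma aut_or_edges : edge_img sigma @: gE H = gE H.
Proof.
case: is_aut_orP => _ hE _ _.
apply/eqP; rewrite eqEcard card_imset ?leqnn ?andbT; last exact: edge_img_inj.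
apply/subsetP => e' /imsetP [e he ->].
have [x [y [_ hx hy ee]]] := SP_edge_pair hH he.
by rewrite ee /edge_img imset_set2 hE // -ee.
Qed.

Lemma aut_or_edges_avoiding c :
  edge_img sigma @: edges_avoiding (gE H) c = edges_avoiding (gE H) (sigma c).
Proof.
have sigma_notin e : (sigma c \notin edge_img sigma e) = (c \notin e).
  by rewrite /edge_img mem_imset //; apply: perm_inj.
apply/setP => e; apply/imsetP/idP => [[e' he' ->]|].
  move: he'; rewrite !inE sigma_notin => /andP [he' ->].
  by rewrite -aut_or_edges imset_f.
rewrite inE -{1}aut_or_edges => /andP [/imsetP [e' he' ->] hc].
by exists e' => //; rewrite inE he' -sigma_notin.
Qed.

Lemma connect_avoiding_aut c x y :
  connect (adj (edges_avoiding (gE H) c)) x y ->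
  connect (adj (edges_avoiding (gE H) (sigma c))) (sigma x) (sigma y).
Proof.
rewrite -aut_or_edges_avoiding; apply: connect_homo_collapse => x' y' hxy; right.
by rewrite /adj -imset_set2; apply: imset_f.
Qed.

End SPAutomorphism.

Section SerialSuperedge.
Variable T : finType.
Variables (G : graph T) (s t : T) (k : nat) (Gs : nat -> graph T) (ss ts : nat -> T).
Hypothesis hser : serial_cond G s t k Gs ss ts.
Hypothesis hsp : forall i, i < k -> SP (Gs i) (ss i) (ts i).
Hypothesis hns : forall i, i < k -> non_serial (Gs i) (ss i) (ts i).

Let hterm i (hi : i < k) := SP_terminals (hsp hi).

Local Notation u := (junction t k ss).
Local Notation V i := (gV (Gs i)).
Local Notation reach c a b := (connect (adj (edges_avoiding (gE G) c)) a b).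
Local Notation st_cut c := [&& c \in gV G, c != s, c != t & ~~ reach c s t].
Local Notation separates c x := (st_cut c && (c != x) && ~~ reach c s x).

Lemma piece_of_pair l j x y : l < k -> j < k -> x != y -> x \in V l -> y \in V l ->
  x \in V j -> y \in V j -> l = j.
Proof.
move=> hl hj nxy hxl hyl hx hy.
suff meet a b : a < b -> b < k -> x \in V a -> y \in V a -> x \in V b -> y \in V b -> False.
  by case: (ltngtP l j) => // h; [case: (meet l j) | case: (meet j l)].
move=> hab hb xa ya xb yb.
have [_ ex] := piece_meet hser hab hb xa xb; have [_ ey] := piece_meet hser hab hb ya yb.
by move: nxy; rewrite ex ey eqxx.
Qed.

Lemma piece_edge j x y : j < k -> x != y -> x \in V j -> y \in V j ->
  [set x; y] \in gE G -> [set x; y] \in gE (Gs j).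
Proof.
move=> hj nxy hx hy /(serial_edgeP hser) [l hl he].
have hxl := SP_edge_vertex (hsp hl) he (set21 x y).
have hyl := SP_edge_vertex (hsp hl) he (set22 x y).
by rewrite -(piece_of_pair hl hj nxy hxl hyl hx hy).
Qed.

Lemma piece_of_edge l j e : l < k -> j < k -> e \in gE (Gs l) -> e \in gE (Gs j) -> l = j.
Proof.
move=> hl hj hel hej; have [x [y [nxy hx hy ee]]] := SP_edge_pair (hsp hl) hel.
have hxj : x \in V j by apply: SP_edge_vertex (hsp hj) hej _; rewrite ee set21.
have hyj : y \in V j by apply: SP_edge_vertex (hsp hj) hej _; rewrite ee set22.
exact: piece_of_pair hl hj nxy hx hy hxj hyj.
Qed.

Lemma junction_neq_s m : 0 < m -> m <= k -> u m != s.
Proof.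
move=> m0 mk; rewrite -(junction0 hser); apply/eqP.
by move/(junction_inj hser hterm mk (leq0n k)); lia.
Qed.

Lemma junction_neq_t m : m < k -> u m != t.
Proof.
move=> mk; rewrite -{2}(junctionk t k ss); apply/eqP.
by move/(junction_inj hser hterm (ltnW mk) (leqnn k)); lia.
Qed.

(* Everything reachable from s while avoiding u m lies in the pieces before m. *)
Lemma junction_separates_later m y j : 0 < m -> m <= j -> j < k -> y \in V j -> y != u m ->
  ~~ reach (u m) s y.
Proof.
move=> m0 mj jk hy ny; apply/negP => hr.
pose before z := [exists l : 'I_k, (l < m) && (z \in V l)] && (z != u m).
have : before y.
  apply: (connect_stable _ hr).
    move=> a b; rewrite /adj inE => /andP [he hca] /andP [/existsP [l /andP [hl hal]] nam].
    have [j' hj' he'] := serial_edgeP hser he.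
    have ha' := SP_edge_vertex (hsp hj') he' (set21 a b).
    have hb' := SP_edge_vertex (hsp hj') he' (set22 a b).
    apply/andP; split; last by apply: contraNneq hca => <-; rewrite set22.
    case: (ltnP j' m) => hj'm.
      by apply/existsP; exists (Ordinal hj'); rewrite /= hj'm hb'.
    have [e1 e2] := piece_meet hser (a := l) (b := j') ltac:(lia) hj' hal ha'.
    by move: nam; rewrite e2 (_ : j' = m) ?eqxx //; lia.
  rewrite /before; apply/andP; split; last by rewrite eq_sym junction_neq_s //; lia.
  apply/existsP; exists (Ordinal (serial_k_gt0 hser)); rewrite /= m0 -(junction0 hser).
  exact: (junction_in t hterm (serial_k_gt0 hser)).
case/andP => /existsP [l /andP [hl hyl]] _.
have [e1 e2] := piece_meet hser (a := l) (b := j) ltac:(lia) jk hyl hy.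
by move: ny; rewrite e2 (_ : j = m) ?eqxx //; lia.
Qed.

Lemma reach_junction c j : j <= k -> (forall l, l < j -> c \notin V l) -> reach c s (u j).
Proof.
move=> hj notin; rewrite -(junction0 hser); apply: connect_junctions => // l hl.
have lk : l < k by lia.
rewrite junction_lt //; apply: connect_adjS (SP_connect (hsp lk) (junctionS_in hser hterm lk)).
exact: SP_edges_avoiding (hsp lk) (serial_piece_edges hser lk) (notin l hl).
Qed.

Lemma reach_piece c j y : j < k -> (forall l, l <= j -> c \notin V l) -> y \in V j ->
  reach c s y.
Proof.
move=> hj notin hy.
apply: connect_trans (reach_junction (ltnW hj) (fun l hl => notin l (ltnW hl))) _.
rewrite junction_lt //; apply: connect_adjS (SP_connect (hsp hj) hy).
exact: SP_edges_avoiding (hsp hj) (serial_piece_edges hser hj) (notin j (leqnn j)).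
Qed.

Lemma reach_piece_avoid_next j y : j < k -> y \in V j -> y != u j.+1 -> reach (u j.+1) s y.
Proof.
move=> hj hy ny.
have notin l : l < j -> u j.+1 \notin V l.
  move=> hl; apply/negP => hin.
  have [_ e] := piece_meet hser hl hj hin (junctionS_in hser hterm hj).
  by have := junction_inj hser hterm (a := j.+1) (b := j) hj (ltnW hj) e; lia.
apply: connect_trans (reach_junction (ltnW hj) notin) _.
rewrite [u j]junction_lt //; move: (SP_connect_avoid (hsp hj) hy).
rewrite (ts_junction hser hj) => /(_ ny).
exact/connect_adjS/edges_avoidingS/(serial_piece_edges hser hj).
Qed.

Lemma st_cut_junction m : 0 < m -> m < k -> st_cut (u m).
Proof.
move=> m0 mk; apply/and4P; split.
- exact: (subsetP (serial_piece_vertices hser mk)) _ (junction_in t hterm mk).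
- by rewrite junction_neq_s // ltnW.
- exact: junction_neq_t.
- apply: (junction_separates_later (j := k.-1)) => //; try lia.
    by have := junctionk_in hser hterm; rewrite junctionk.
  by rewrite eq_sym junction_neq_t.
Qed.

Lemma inner_neq_junction i x m : i < k -> x \in V i -> x != u i -> x != u i.+1 -> m <= k ->
  x != u m.
Proof.
move=> hi hx n1 n2 mk; apply/eqP => e.
case: (ltngtP m i) => h; last by move: n1; rewrite e h eqxx.
  have hxm : x \in V m by rewrite e; apply: (junction_in t hterm); lia.
  by have [_ e2] := piece_meet hser h hi hxm hx; move: n1; rewrite e2 eqxx.
case: (ltngtP m i.+1) => h2; [lia | | by move: n2; rewrite e h2 eqxx].
have hm1 : m.-1 < k by lia.
have hxm : x \in V m.-1 by rewrite e; have := junctionS_in hser hterm hm1; rewrite prednK //; lia.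
have [e1 e2] := piece_meet hser (a := i) (b := m.-1) ltac:(lia) hm1 hx hxm.
by move: n2; rewrite e2 e1 eqxx.
Qed.

Lemma reach_avoiding_inner i v : i < k -> v \in V i -> v != u i -> v != u i.+1 ->
  reach v s t.
Proof.
move=> hi hv n1 n2.
rewrite -(junction0 hser) -{2}(junctionk t k ss); apply: connect_junctions => // l hl.
have [->|nli] := eqVneq l i.
  move: (non_serial_connect_avoid (hsp hi) (hns hi) hv).
  rewrite -(junction_lt t ss hi) (ts_junction hser hi) => /(_ n1 n2).
  exact/connect_adjS/edges_avoidingS/(serial_piece_edges hser hi).
have nv : v \notin V l.
  apply/negP => hvl; case: (ltngtP l i) => h; last by rewrite h eqxx in nli.
  - by have [_ e2] := piece_meet hser h hi hvl hv; move: n1; rewrite e2 eqxx.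
  - by have [e1 e2] := piece_meet hser h hl hv hvl; move: n2; rewrite e2 e1 eqxx.
rewrite junction_lt //; apply: connect_adjS (SP_connect (hsp hl) (junctionS_in hser hterm hl)).
exact: SP_edges_avoiding (hsp hl) (serial_piece_edges hser hl) nv.
Qed.

Lemma junction_or_inner x : x \in gV G ->
  (exists2 m, m <= k & x = u m) \/
  exists i, [/\ i < k, x \in V i, x != u i & x != u i.+1].
Proof.
move=> /(serial_vertexP hser) [i hi hx].
have [->|n1] := eqVneq x (u i); first by left; exists i => //; apply: ltnW.
have [->|n2] := eqVneq x (u i.+1); first by left; exists i.+1.
by right; exists i.
Qed.

Lemma st_cut_is_junction c : st_cut c -> exists2 m, 0 < m < k & c = u m.
Proof.
case/and4P => hc ns nt nr; case: (junction_or_inner hc) => [[m hm ec]|[i [hi hx n1 n2]]].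
  exists m => //; apply/andP; split.
    by case: (posnP m) => [e|//]; move: ns; rewrite ec e (junction0 hser) eqxx.
  by case: (ltngtP m k) => // h; [lia | move: nt; rewrite ec h junctionk eqxx].
by move: nr; rewrite (reach_avoiding_inner hi hx n1 n2).
Qed.

Lemma separates_junctions j m : 0 < j < k -> 0 < m < k -> separates (u j) (u m) = (j < m).
Proof.
move=> /andP [j0 jk] /andP [m0 mk]; have [h|h] := ltnP j m.
  rewrite st_cut_junction //=; apply/andP; split.
    by apply/eqP => /(junction_inj hser hterm (ltnW jk) (ltnW mk)); lia.
  apply: (junction_separates_later (j := m)) => //; first exact: ltnW.
    exact: (junction_in t hterm mk).
  by apply/eqP => /(junction_inj hser hterm (ltnW mk) (ltnW jk)); lia.
have [->|njm] := eqVneq j m; first by rewrite eqxx andbF.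
rewrite (reach_junction (j := m)) ?andbF //; first by lia.
move=> l hl; apply/negP => hin.
by have [e1 _] := piece_meet hser (a := l) (b := j) ltac:(lia) jk hin (junction_in t hterm jk); lia.
Qed.

Lemma separates_inner m i x : 0 < m < k -> i < k -> x \in V i -> x != u i -> x != u i.+1 ->
  separates (u m) x = (m <= i).
Proof.
move=> /andP [m0 mk] hi hx n1 n2; have [h|h] := leqP m i.
  rewrite st_cut_junction //=; apply/andP; split.
    by rewrite eq_sym (inner_neq_junction hi hx n1 n2) // ltnW.
  apply: (junction_separates_later (j := i)) => //.
  by rewrite (inner_neq_junction hi hx n1 n2) // ltnW.
have [->|nm] := eqVneq m i.+1; first by rewrite (reach_piece_avoid_next hi hx n2) andbF.
rewrite (reach_piece (j := i) hi _ hx) ?andbF // => l hl; apply/negP => hin.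
by have [e1 _] := piece_meet hser (a := l) (b := m) ltac:(lia) mk hin (junction_in t hterm mk); lia.
Qed.

Section Automorphism.
Variable sigma : {perm T}.
Hypothesis hs : is_aut_or G s t sigma.

Let hG : SP G s t := SP_serial hser hsp.

Lemma reach_aut c a b : reach (sigma c) (sigma a) (sigma b) = reach c a b.
Proof.
apply/idP/idP => [|/(connect_avoiding_aut hs hG) //].
by move/(connect_avoiding_aut (is_aut_orV hs) hG); rewrite !permK.
Qed.

Lemma st_cut_aut c : st_cut (sigma c) = st_cut c.
Proof.
have [_ _ hs0 ht0] := is_aut_orP hs.
have e1 : (sigma c != s) = (c != s) by rewrite -{1}hs0 (inj_eq perm_inj).
have e2 : (sigma c != t) = (c != t) by rewrite -{1}ht0 (inj_eq perm_inj).
by rewrite (aut_or_vertex hs) e1 e2 -[reach c s t]reach_aut hs0 ht0.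
Qed.

Lemma separates_aut c x : separates (sigma c) (sigma x) = separates c x.
Proof.
have [_ _ hs0 _] := is_aut_orP hs.
by rewrite st_cut_aut (inj_eq perm_inj) -[reach c s x]reach_aut hs0.
Qed.

(* sigma permutes the junctions u 1, ..., u k.-1 while preserving their order
   (u j separates u m from s iff j < m), hence fixes each of them. *)
Lemma aut_fix_junction m : m <= k -> sigma (u m) = u m.
Proof.
have [_ _ hs0 ht0] := is_aut_orP hs.
elim/ltn_ind: m => m IH hm.
have [->|m0] := posnP m; first by rewrite (junction0 hser).
have [mk|->] : m < k \/ m = k by lia.
  2: by rewrite junctionk.
have [m' /andP [m'0 m'k] e] : exists2 m', 0 < m' < k & sigma (u m) = u m'.
  by apply: st_cut_is_junction; rewrite st_cut_aut st_cut_junction.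
have Hm : 0 < m < k by rewrite m0.
case: (ltngtP m' m) => h; last by rewrite e h.
  have := IH m' h (ltnW m'k); rewrite -{2}e => /perm_inj.
  by move/(junction_inj hser hterm (ltnW m'k) (ltnW mk)); lia.
pose y := (sigma^-1)%g (u m).
have sy : sigma y = u m by rewrite /y permKV.
have [m'' Hm'' ey] : exists2 m'', 0 < m'' < k & y = u m''.
  by apply: st_cut_is_junction; rewrite -st_cut_aut sy st_cut_junction.
have lt_m''m : m'' < m.
  rewrite -(separates_junctions Hm'' Hm) -ey -separates_aut sy e.
  by rewrite separates_junctions ?m'0.
have m''k : m'' <= k by lia.
have := IH m'' lt_m''m m''k; rewrite -ey sy ey.
by move/(junction_inj hser hterm (ltnW mk) m''k); lia.
Qed.

Lemma aut_inner i x : i < k -> x \in V i -> x != u i -> x != u i.+1 -> sigma x \in V i.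
Proof.
move=> hi hx n1 n2.
have hxG : sigma x \in gV G by rewrite (aut_or_vertex hs) (subsetP (serial_piece_vertices hser hi)).
case: (junction_or_inner hxG) => [[m hm e]|[j [hj hxj n1' n2']]].
  move: e; rewrite -(aut_fix_junction hm) => /perm_inj exm.
  by move: (inner_neq_junction hi hx n1 n2 hm); rewrite exm eqxx.
suff -> : i = j by [].
case: (ltngtP j i) => h //.
- have Hi : 0 < i < k by rewrite hi; lia.
  have := separates_inner Hi hi hx n1 n2.
  rewrite -(separates_aut _ x) (aut_fix_junction (ltnW hi)) (separates_inner Hi hj hxj n1' n2').
  by rewrite leqnn; lia.
- have Hj : 0 < j < k by rewrite hj; lia.
  have := separates_inner Hj hj hxj n1' n2'.
  rewrite -(aut_fix_junction (ltnW hj)) separates_aut (separates_inner Hj hi hx n1 n2).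
  by rewrite leqnn; lia.
Qed.

Lemma aut_piece_vertices i : i < k -> sigma @: V i = V i.
Proof.
move=> hi; apply/eqP; rewrite eqEcard card_imset ?leqnn ?andbT; last exact: perm_inj.
apply/subsetP => y /imsetP [x hx ->].
have [->|n1] := eqVneq x (u i); first by rewrite aut_fix_junction ?(junction_in t hterm hi) // ltnW.
have [->|n2] := eqVneq x (u i.+1); first by rewrite aut_fix_junction ?(junctionS_in hser hterm hi).
exact: aut_inner.
Qed.

Lemma aut_piece_edges i : i < k -> edge_img sigma @: gE (Gs i) = gE (Gs i).
Proof.
move=> hi; have [_ hE _ _] := is_aut_orP hs.
apply/eqP; rewrite eqEcard card_imset ?leqnn ?andbT; last exact: edge_img_inj.
apply/subsetP => e' /imsetP [e he ->].
have [x [y [nxy hx hy ee]]] := SP_edge_pair (hsp hi) he.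
have sV z : z \in V i -> sigma z \in V i by move=> hz; rewrite -(aut_piece_vertices hi) imset_f.
have sG z : z \in V i -> z \in gV G by apply/subsetP/(serial_piece_vertices hser hi).
rewrite ee /edge_img imset_set2; apply: piece_edge; rewrite ?sV ?(inj_eq perm_inj) //.
by rewrite hE ?sG // -ee (subsetP (serial_piece_edges hser hi)).
Qed.

Lemma aut_restrict_piece i : i < k -> is_aut_or (Gs i) (ss i) (ts i) sigma.
Proof.
move=> hi; apply/and4P; split.
- by rewrite aut_piece_vertices.
- apply/forallP => x; apply/implyP => _; apply/forallP => y; apply/implyP => _.
  have -> : [set sigma x; sigma y] = edge_img sigma [set x; y] by rewrite /edge_img imset_set2.
  by rewrite -{2}(aut_piece_edges hi) (mem_imset _ _ (@edge_img_inj _ sigma)).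
- by rewrite -(junction_lt t ss hi) aut_fix_junction // ltnW.
- by rewrite (ts_junction hser hi) aut_fix_junction.
Qed.

End Automorphism.

Lemma bigcup_trees_connected (Fs : nat -> {set {set T}}) :
  (forall j, j < k -> spanning_tree (Gs j) (Fs j)) ->
  connected_on (gV G) (\bigcup_(j < k) Fs j).
Proof.
move=> trees.
have from_s x : x \in gV G -> connect (adj (\bigcup_(j < k) Fs j)) s x.
  move=> /(serial_vertexP hser) [j hj hx]; rewrite -(junction0 hser).
  apply: (connect_pieces hser hterm hj _ hx) => l hl y hy.
  have lk : l < k by lia.
  have [_ [cF _]] := trees l lk.
  apply: connect_adjS (cF _ _ (junction_in t hterm lk) hy).
  by apply/subsetP => e he; apply/bigcupP; exists (Ordinal lk).
move=> x y hx hy; apply: connect_trans (from_s y hy).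
by rewrite connect_adj_sym; apply: from_s.
Qed.

Lemma bigcup_trees_acyclic (Fs : nat -> {set {set T}}) :
  (forall j, j < k -> spanning_tree (Gs j) (Fs j)) ->
  acyclic (\bigcup_(j < k) Fs j).
Proof.
move=> trees [c [sc uc]].
have [x [y [nxy /bigcupP [[i hi] _ /= he] cyx]]] := ucycle_edge_not_bridge sc uc.
have [sFi [_ aFi]] := trees i hi.
have Fsub l : l < k -> forall e z, e \in Fs l -> z \in e -> z \in V l.
  by move=> hl e z he'; apply: SP_edge_vertex (hsp hl) (subsetP (trees l hl).1 _ he').
(* Collapsing the pieces before (after) piece i onto u i (u i.+1) turns the path
   from y to x in the union into one inside Fs i, contradicting acyclicity. *)
pose r z := if z \in V i then z
            else if [exists l : 'I_k, (l < i) && (z \in V l)] then u i else u i.+1.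
have r_before l z : l < i -> z \in V l -> r z = u i.
  move=> hl hz; rewrite /r; case: ifP => hzi; first by have [_ ->] := piece_meet hser hl hi hz hzi.
  case: ifP => // /negbT /existsP []; exists (Ordinal (ltn_trans hl hi)).
  by rewrite /= hl hz.
have r_after l z : i < l -> l < k -> z \in V l -> r z = u i.+1.
  move=> hl hlk hz; rewrite /r; case: ifP => hzi.
    by have [-> ->] := piece_meet hser hl hlk hzi hz.
  case: ifP => // /existsP [l' /andP [hl' hz']].
  by have [e1 _] := piece_meet hser (ltn_trans hl' hl) hlk hz' hz; lia.
have r_fix z : z \in V i -> r z = z by rewrite /r => ->.
have hx := Fsub i hi _ _ he (set21 x y); have hy := Fsub i hi _ _ he (set22 x y).
move: (acyclic_edge_bridge aFi (x := y) (y := x)); rewrite eq_sym nxy setUC he.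
move=> /(_ isT isT) /negP; apply.
have := connect_homo_collapse (e' := adj (Fs i :\ [set x; y])) (f := r) _ cyx.
rewrite (r_fix x hx) (r_fix y hy); apply.
move=> a b; rewrite /adj !inE => /andP [ne /bigcupP [[l hl] _ hab]].
have ha := Fsub l hl _ _ hab (set21 a b); have hb := Fsub l hl _ _ hab (set22 a b).
case: (ltngtP l i) => h.
- by left; rewrite (r_before l a h ha) (r_before l b h hb).
- by left; rewrite (r_after l a h hl ha) (r_after l b h hl hb).
- have hai : a \in V i by rewrite -h.
  have hbi : b \in V i by rewrite -h.
  by right; rewrite (r_fix a hai) (r_fix b hbi) ne -h.
Qed.

Lemma bigcup_spanning_tree (Fs : nat -> {set {set T}}) :
  (forall j, j < k -> spanning_tree (Gs j) (Fs j)) ->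
  spanning_tree G (\bigcup_(j < k) Fs j).
Proof.
move=> trees; split; last by split; [apply: bigcup_trees_connected | apply: bigcup_trees_acyclic].
apply/subsetP => e /bigcupP [[j hj] _ he].
exact: subsetP (serial_piece_edges hser hj) _ (subsetP (trees j hj).1 _ he).
Qed.

Definition piece_tree j := odflt set0 [pick F | `[< spanning_tree (Gs j) F >] ].

Lemma piece_treeP j : j < k -> spanning_tree (Gs j) (piece_tree j).
Proof.
move=> hj; rewrite /piece_tree; case: pickP => [F /asboolP //|none]; exfalso.
have [F hF] : exists F, spanning_tree (Gs j) F.
  apply: exists_spanning_tree => x y hx hy.
  apply: connect_trans (SP_connect (hsp hj) hy).
  by rewrite connect_adj_sym; exact: SP_connect (hsp hj) hx.
by have := none F; rewrite (asboolT hF).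
Qed.

Lemma piece_tree_sub j : j < k -> piece_tree j \subset gE (Gs j).
Proof. by case/piece_treeP. Qed.

Definition glue i (A : {set {set T}}) := A :|: \bigcup_(j < k | j != i :> nat) piece_tree j.

Lemma in_glue i (A : {set {set T}}) e :
  (e \in glue i A) = (e \in A) || [exists j : 'I_k, (j != i :> nat) && (e \in piece_tree j)].
Proof.
rewrite /glue inE; congr (_ || _).
by apply/bigcupP/existsP => [[j hj he]|[j /andP [hj he]]]; exists j => //; rewrite hj.
Qed.

Lemma NT_sub (H : graph T) (A : {set {set T}}) : A \in NT H -> A \subset gE H.
Proof. by case/NT_spanning_tree => F [e [[sF _] _ ->]]; apply: subset_trans (subsetDl _ _) sF. Qed.

Lemma glue_piece_edges i (A : {set {set T}}) j : i < k -> j < k -> A \subset gE (Gs i) ->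
  glue i A :&: gE (Gs j) = if j == i then A else piece_tree j.
Proof.
move=> hi hj sA; apply/setP => e; rewrite inE in_glue.
have tree_piece l : l < k -> e \in piece_tree l -> e \in gE (Gs l).
  by move=> hl; apply/subsetP/piece_tree_sub.
have [->|nji] := eqVneq j i; apply/idP/idP.
- case/andP => /orP [//|/existsP [[l hl] /andP [/= nli hel]]] hei.
  by rewrite (piece_of_edge hl hi (tree_piece l hl hel) hei) eqxx in nli.
- by move=> heA; rewrite heA (subsetP sA).
- case/andP => /orP [heA|/existsP [[l hl] /andP [_ hel]]] hej.
    by rewrite (piece_of_edge hi hj (subsetP sA _ heA) hej) eqxx in nji.
  by rewrite -(piece_of_edge hl hj (tree_piece l hl hel) hej).
- move=> hej; rewrite (tree_piece j hj hej) andbT; apply/orP; right.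
  by apply/existsP; exists (Ordinal hj); rewrite /= nji hej.
Qed.

Lemma glue_NT i (A : {set {set T}}) : i < k -> A \in NT (Gs i) -> glue i A \in NT G.
Proof.
move=> hi /NT_spanning_tree [F [e [hF he ->]]].
pose Fs j := if j == i then F else piece_tree j.
have trees j : j < k -> spanning_tree (Gs j) (Fs j).
  by rewrite /Fs; case: eqP => [-> //|_]; apply: piece_treeP.
rewrite inE; apply/asboolP; exists (\bigcup_(j < k) Fs j), e.
split; first exact: bigcup_spanning_tree.
split; first by apply/bigcupP; exists (Ordinal hi); rewrite // /Fs eqxx.
apply/setP => f; rewrite in_glue !inE; apply/idP/idP.
- case/orP => [/andP [-> hf] | /existsP [[j hj] /andP [/= nji hf]]].
    by apply/bigcupP; exists (Ordinal hi); rewrite // /Fs eqxx.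
  have -> : f != e.
    apply/eqP => fe; have hfi : f \in gE (Gs i) by rewrite fe (subsetP hF.1).
    by rewrite (piece_of_edge hj hi (subsetP (piece_tree_sub hj) _ hf) hfi) eqxx in nji.
  by apply/bigcupP; exists (Ordinal hj); rewrite // /Fs (negbTE nji).
- case/andP => nf /bigcupP [[j hj] _]; rewrite /Fs; case: eqP => [_ hf|nji hf].
    by rewrite nf hf.
  by apply/orP; right; apply/existsP; exists (Ordinal hj); rewrite hf andbT; apply/eqP.
Qed.

Lemma glue_orbit_eq i j (A A' : {set {set T}}) : i < k -> j < k ->
  A \in NT (Gs i) -> A' \in NT (Gs j) ->
  NT_orbit G s t (glue i A) = NT_orbit G s t (glue j A') ->
  i = j /\ NT_orbit (Gs i) (ss i) (ts i) A = NT_orbit (Gs i) (ss i) (ts i) A'.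
Proof.
move=> hi hj hA hA' eqO.
have : glue j A' \in NT_orbit G s t (glue i A) by rewrite eqO NT_orbit_refl // glue_NT.
rewrite inE => /andP [_ /existsP [sigma /andP [hs /eqP E]]].
have sA := NT_sub hA; have sA' := NT_sub hA'.
have img_A : edge_img sigma @: A = if i == j then A' else piece_tree i.
  move: (congr1 (fun B => B :&: gE (Gs i)) E) => /=.
  rewrite (glue_piece_edges hj hi sA') img_edgesE -{1}(aut_piece_edges hs hi) -img_edgesI.
  by rewrite (glue_piece_edges hi hi sA) eqxx eq_sym.
have [eij|nij] := eqVneq i j.
  move: img_A; rewrite eij eqxx => <-; split => //.
  by rewrite -img_edgesE NT_orbit_img // aut_restrict_piece.
(* Otherwise sigma maps A onto a spanning tree of G_i, but a near tree is disconnected. *)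
exfalso; rewrite (negbTE nij) in img_A.
have [F [e [hF he eA]]] := NT_spanning_tree hA.
have [x [y [nxy hx hy ee]]] := SP_edge_pair (hsp hi) (subsetP hF.1 _ he).
have cA : connected_on (V i) A.
  have := connected_on_img (sigma := (sigma^-1)%g) (piece_treeP hi).2.1.
  by rewrite -img_A (aut_piece_vertices (is_aut_orV hs) hi) -!img_edgesE img_edgesK.
have := acyclic_edge_bridge hF.2.2 nxy; rewrite -ee => /(_ he).
by rewrite -eA cA.
Qed.

Lemma n_orbits_piece_le i : i < k ->
  n_orbits (Gs i) (ss i) (ts i) <= #|[set NT_orbit G s t (glue i A) | A in NT (Gs i)]|.
Proof.
move=> hi; apply: leq_card_imset_factor => A A' hA hA' eqO.
by have [_ ->] := glue_orbit_eq hi hi hA hA' eqO.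
Qed.

Lemma sum_n_orbits_pieces :
  \sum_(i < k) n_orbits (Gs i) (ss i) (ts i) <= n_orbits G s t.
Proof.
pose Q i := [set NT_orbit G s t (glue i A) | A in NT (Gs i)].
apply: leq_trans (_ : \sum_(i < k) #|Q i| <= _).
  by apply: leq_sum => -[i hi] _; apply: n_orbits_piece_le.
apply: leq_sum_card_disjoint => [i hi|i j hi hj nij].
  by apply/subsetP => _ /imsetP [A hA ->]; rewrite imset_f ?glue_NT.
apply/setP => O; rewrite !inE; apply/negP => /andP [/imsetP [A hA ->] /imsetP [A' hA' eqO]].
by have [eij _] := glue_orbit_eq hi hj hA hA' eqO; rewrite eij eqxx in nij.
Qed.

End SerialSuperedge.

Theorem lemma5p14 :
  exists C : nat, 0 < C /\
  forall (T : finType) (G : graph T) (s t : T) (k : nat)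
         (Gs : nat -> graph T) (ss ts : nat -> T),
    serial_superedge G s t k Gs ss ts ->
    (forall i, i < k -> non_serial (Gs i) (ss i) (ts i)) ->
    \sum_(i < k) #|gV (Gs i)| * n_orbits (Gs i) (ss i) (ts i)
      <= C * #|gV G| * n_orbits G s t.
Proof.
exists 1; split => // T G s t k Gs ss ts [hser hsp] hns.
rewrite mul1n; apply: leq_trans (_ : \sum_(i < k) #|gV G| * n_orbits (Gs i) (ss i) (ts i) <= _).
  apply: leq_sum => -[i hi] _; rewrite leq_mul2r subset_leq_card ?orbT //.
  exact: (serial_piece_vertices hser hi).
by rewrite -big_distrr leq_mul2l sum_n_orbits_pieces // orbT.
Qed.
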